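(* Let $\Lambda$ be any lattice in $\mathbb{E}^3$ whose shortest non-zero vector has length $2$. Then for every $n\ge 1$, $C_\Lambda(n)\le C_{fcc}(n)$. More precisely, there is a map $f:\Lambda\to\Lambda_{fcc}$ of the form $f(\alpha\mathbf{v}_1+\beta\mathbf{v}_2+\gamma\mathbf{v}_3)=\alpha\mathbf{w}_1+\beta\mathbf{w}_2+\gamma\mathbf{w}_3$ ($\alpha,\beta,\gamma\in\mathbb{Z}$), for suitable integral bases $\mathbf{v}_1,\mathbf{v}_2,\mathbf{v}_3$ of $\Lambda$ and $\mathbf{w}_1,\mathbf{w}_2,\mathbf{w}_3$ of $\Lambda_{fcc}$, such that $\mathrm{dist}(\mathbf{x},\mathbf{y})=2$ implies $\mathrm{dist}(f(\mathbf{x}),f(\mathbf{y}))=2$ for all $\mathbf{x},\mathbf{y}\in\Lambda$.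
   Context: A lattice in $\mathbb{E}^3$ is the set of integer linear combinations of three linearly independent vectors. $\Lambda_{fcc}$ is the face-centered cubic lattice with shortest non-zero vector of length $2$. For a lattice $L$, $C_L(n)$ is the largest number of touching pairs (centers at distance $2$) among packings of $n$ unit balls (pairwise disjoint interiors) with all centers in $L$; $C_{fcc}(n):=C_{\Lambda_{fcc}}(n)$. *)

From Stdlib Require Import Reals ZArith List.
Open Scope R_scope.

Definition vec := (R * R * R)%type.

Definition vzero : vec := (0, 0, 0).
Definition vadd (x y : vec) : vec :=
  let '(x1, x2, x3) := x in let '(y1, y2, y3) := y in (x1 + y1, x2 + y2, x3 + y3).
Definition vscale (a : R) (x : vec) : vec :=
  let '(x1, x2, x3) := x in (a * x1, a * x2, a * x3).

Definition edist (x y : vec) : R :=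
  let '(x1, x2, x3) := x in let '(y1, y2, y3) := y in
  sqrt ((x1 - y1)^2 + (x2 - y2)^2 + (x3 - y3)^2).

Definition comb (a b c : R) (v1 v2 v3 : vec) : vec :=
  vadd (vadd (vscale a v1) (vscale b v2)) (vscale c v3).

Definition zcomb (a b c : Z) (v1 v2 v3 : vec) : vec :=
  comb (IZR a) (IZR b) (IZR c) v1 v2 v3.

Definition lin_indep (v1 v2 v3 : vec) : Prop :=
  forall a b c : R, comb a b c v1 v2 v3 = vzero -> a = 0 /\ b = 0 /\ c = 0.

Definition pointset := vec -> Prop.

Definition lattice_basis (L : pointset) (v1 v2 v3 : vec) : Prop :=
  lin_indep v1 v2 v3 /\
  forall x, L x <-> exists a b c : Z, x = zcomb a b c v1 v2 v3.

Definition is_lattice (L : pointset) : Prop :=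
  exists v1 v2 v3, lattice_basis L v1 v2 v3.

Definition min_norm (L : pointset) (d : R) : Prop :=
  (exists x, L x /\ x <> vzero /\ edist x vzero = d) /\
  (forall x, L x -> x <> vzero -> d <= edist x vzero).

(* The face-centred cubic lattice with shortest non-zero vector of length 2:
   generated by sqrt 2 * (1,1,0), sqrt 2 * (1,0,1), sqrt 2 * (0,1,1). *)
Definition fcc1 : vec := (sqrt 2, sqrt 2, 0).
Definition fcc2 : vec := (sqrt 2, 0, sqrt 2).
Definition fcc3 : vec := (0, sqrt 2, sqrt 2).
Definition Lambda_fcc : pointset :=
  fun x => exists a b c : Z, x = zcomb a b c fcc1 fcc2 fcc3.

(* A packing of unit balls with centres in L, listed as a sequence of centres:
   all centres in L, pairwise (distinct positions) at distance >= 2,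
   i.e. the balls have pairwise disjoint interiors. *)
Definition packing (L : pointset) (P : list vec) : Prop :=
  (forall x, In x P -> L x) /\
  (forall i j, (i < j < length P)%nat ->
     2 <= edist (nth i P vzero) (nth j P vzero)).

Fixpoint contacts (P : list vec) : nat :=
  match P with
  | nil => 0%nat
  | x :: P' =>
      (length (filter (fun y => if Req_EM_T (edist x y) 2 then true else false) P')
       + contacts P')%nat
  end.

(* is_C L n m : m = C_L(n), the largest number of touching pairs among
   packings of n unit balls with centres in L (the maximum is attained). *)
Definition is_C (L : pointset) (n : nat) (m : nat) : Prop :=
  (exists P, packing L P /\ length P = n /\ contacts P = m) /\
  (forall P, packing L P -> length P = n -> (contacts P <= m)%nat).

From Stdlib Require Import Reals ZArith List Lra Lia Psatz Classical ClassicalEpsilon.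
Open Scope R_scope.

(* Every lattice has an obtuse superbase b0 + b1 + b2 + b3 = 0 (Selling): a basis minimising
   |b1|^2 + |b2|^2 + |b3|^2 + |b0|^2 works, because the elementary basis changes b1 -> -b1,
   bj -> bj + b1 change this sum by -2 b1.bj or -2 b0.b1. In an obtuse superbase
   |c1 b1 + c2 b2 + c3 b3|^2 = sum_{i<j} (-bi.bj) (ci - cj)^2 (c0 = 0), and peeling off the
   indicator of the largest coordinates shows that a minimal vector (squared length 4) has
   coordinates in {0,1}^3 or {-1,0}^3. The squared lengths of b1+b2, b1+b3, b2+b3 add up to the
   Selling sum, which is at least 16, so after relabelling b1 + b2 is not minimal; then every
   minimal vector a b1 + b b2 + c b3 satisfies 4 (a^2 + b^2 + c^2 - a c - b c) = 4, the squared
   length of a b1' + b b2' + c b3' for a suitable basis of the fcc lattice. The induced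
   coordinate map sends touching pairs to touching pairs and packings to packings. *)

Definition dot (x y : vec) : R :=
  let '(x1, x2, x3) := x in let '(y1, y2, y3) := y in x1 * y1 + x2 * y2 + x3 * y3.
Definition nrm (x : vec) : R := dot x x.
Definition vneg (x : vec) : vec := let '(x1, x2, x3) := x in (- x1, - x2, - x3).
Definition vsub (x y : vec) : vec := vadd x (vneg y).
Definition cross (x y : vec) : vec :=
  let '(x1, x2, x3) := x in let '(y1, y2, y3) := y in
  (x2 * y3 - x3 * y2, x3 * y1 - x1 * y3, x1 * y2 - x2 * y1).

Lemma vec_ext (a b c d e f : R) : a = d -> b = e -> c = f -> ((a, b, c) : vec) = (d, e, f).
Proof. intros -> -> ->; reflexivity. Qed.

Ltac destruct_vecs :=
  repeat match goal with v : vec |- _ => destruct v as [[? ?] ?] end.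

Ltac vec_ring :=
  destruct_vecs; cbv [dot nrm vneg vsub cross vadd vscale comb zcomb vzero]; cbn;
  first [apply vec_ext; ring | ring].

Lemma nrm_nonneg x : 0 <= nrm x.
Proof. destruct_vecs; cbn; nra. Qed.

Lemma nrm_eq0 x : nrm x = 0 -> x = vzero.
Proof.
  destruct x as [[x1 x2] x3]; cbn; intro H.
  assert (x1 = 0) by nra; assert (x2 = 0) by nra; assert (x3 = 0) by nra.
  subst; reflexivity.
Qed.

Lemma nrm_comb a b c v1 v2 v3 :
  nrm (comb a b c v1 v2 v3) =
  a ^ 2 * nrm v1 + b ^ 2 * nrm v2 + c ^ 2 * nrm v3
  + 2 * (a * b * dot v1 v2 + a * c * dot v1 v3 + b * c * dot v2 v3).
Proof. vec_ring. Qed.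

Lemma edist_nrm x y : edist x y = sqrt (nrm (vsub x y)).
Proof. destruct_vecs; unfold edist; f_equal; cbn; ring. Qed.

Lemma edist0r x : edist x vzero = sqrt (nrm x).
Proof. rewrite edist_nrm; f_equal; f_equal; vec_ring. Qed.

Lemma sqrt_eq_2 X : sqrt X = 2 <-> X = 4.
Proof.
  split; intro H.
  - destruct (Rle_dec 0 X) as [HX|HX].
    + rewrite <- (sqrt_sqrt X HX), H; ring.
    + rewrite sqrt_neg_0 in H; lra.
  - subst; replace 4 with (2 * 2) by ring; rewrite sqrt_square; lra.
Qed.

Lemma sqrt_ge_2 X : 0 <= X -> 2 <= sqrt X <-> 4 <= X.
Proof.
  intro HX; split; intro H.
  - rewrite <- (sqrt_sqrt X HX); nra.
  - replace 2 with (sqrt 4) by (replace 4 with (2 * 2) by ring; rewrite sqrt_square; lra).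
    apply sqrt_le_1_alt; exact H.
Qed.

Lemma vsub_zcomb a b c a' b' c' v1 v2 v3 :
  vsub (zcomb a b c v1 v2 v3) (zcomb a' b' c' v1 v2 v3)
  = zcomb (a - a') (b - b') (c - c') v1 v2 v3.
Proof. unfold zcomb; rewrite !minus_IZR; vec_ring. Qed.

Lemma edist_zcomb a b c a' b' c' v1 v2 v3 :
  edist (zcomb a b c v1 v2 v3) (zcomb a' b' c' v1 v2 v3)
  = sqrt (nrm (zcomb (a - a') (b - b') (c - c') v1 v2 v3)).
Proof. rewrite edist_nrm, vsub_zcomb; reflexivity. Qed.

Lemma lattice_basis_mem L v1 v2 v3 a b c :
  lattice_basis L v1 v2 v3 -> L (zcomb a b c v1 v2 v3).
Proof. intros [_ Hspan]; apply Hspan; eauto. Qed.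

Lemma lattice_basis_mem3 L v1 v2 v3 :
  lattice_basis L v1 v2 v3 -> L v1 /\ L v2 /\ L v3.
Proof.
  intro Hb.
  replace v1 with (zcomb 1 0 0 v1 v2 v3) by vec_ring.
  replace v2 with (zcomb 0 1 0 v1 v2 v3) at 2 by vec_ring.
  replace v3 with (zcomb 0 0 1 v1 v2 v3) at 3 by vec_ring.
  split; [|split]; apply lattice_basis_mem; exact Hb.
Qed.

Lemma lattice_nrm_ge4 L v1 v2 v3 :
  lattice_basis L v1 v2 v3 -> (forall x, L x -> x <> vzero -> 2 <= edist x vzero) ->
  forall a b c : Z, ~ (a = 0 /\ b = 0 /\ c = 0)%Z -> 4 <= nrm (zcomb a b c v1 v2 v3).
Proof.
  intros Hb Hmin a b c Habc.
  assert (Hnz : zcomb a b c v1 v2 v3 <> vzero).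
  { intro E; apply Habc; destruct (proj1 Hb _ _ _ E) as (? & ? & ?).
    split; [|split]; apply eq_IZR; assumption. }
  specialize (Hmin _ (lattice_basis_mem L v1 v2 v3 a b c Hb) Hnz).
  rewrite edist0r in Hmin; apply sqrt_ge_2 in Hmin; [exact Hmin | apply nrm_nonneg].
Qed.

Lemma comb_swap12 x y z a b c : comb x y z b a c = comb y x z a b c.
Proof. vec_ring. Qed.

Lemma comb_swap23 x y z a b c : comb x y z a c b = comb x z y a b c.
Proof. vec_ring. Qed.

Lemma comb_shear x y z s t a b c :
  comb x y z (vneg a) (vadd b (vscale s a)) (vadd c (vscale t a))
  = comb (- x + y * s + z * t) y z a b c.
Proof. vec_ring. Qed.

Lemma lattice_basis_swap12 L a b c : lattice_basis L a b c -> lattice_basis L b a c.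
Proof.
  intros [Hli Hspan]; split.
  - intros x y z E; rewrite comb_swap12 in E.
    destruct (Hli _ _ _ E) as (? & ? & ?); auto.
  - intro p; rewrite Hspan; split; intros (x & y & z & ->); exists y, x, z;
      unfold zcomb; rewrite comb_swap12; reflexivity.
Qed.

Lemma lattice_basis_swap23 L a b c : lattice_basis L a b c -> lattice_basis L a c b.
Proof.
  intros [Hli Hspan]; split.
  - intros x y z E; rewrite comb_swap23 in E.
    destruct (Hli _ _ _ E) as (? & ? & ?); auto.
  - intro p; rewrite Hspan; split; intros (x & y & z & ->); exists x, z, y;
      unfold zcomb; rewrite comb_swap23; reflexivity.
Qed.

(* The coefficient map (x, y, z) |-> (-x + y s + z t, y, z) is an involution of Z^3. *)
Lemma lattice_basis_shear L a b c (s t : Z) :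
  lattice_basis L a b c ->
  lattice_basis L (vneg a) (vadd b (vscale (IZR s) a)) (vadd c (vscale (IZR t) a)).
Proof.
  intros [Hli Hspan]; split.
  - intros x y z E; rewrite comb_shear in E.
    destruct (Hli _ _ _ E) as (Hx & -> & ->); lra.
  - intro p; rewrite Hspan; split; intros (x & y & z & ->);
      exists (- x + y * s + z * t)%Z, y, z; unfold zcomb; rewrite comb_shear;
      f_equal; rewrite !plus_IZR, !mult_IZR, !opp_IZR; ring.
Qed.

Definition selling_sum (b1 b2 b3 : vec) : R :=
  nrm b1 + nrm b2 + nrm b3 + nrm (vadd (vadd b1 b2) b3).

Definition obtuse (b1 b2 b3 : vec) : Prop :=
  let b0 := vneg (vadd (vadd b1 b2) b3) in
  dot b0 b1 <= 0 /\ dot b0 b2 <= 0 /\ dot b0 b3 <= 0 /\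
  dot b1 b2 <= 0 /\ dot b1 b3 <= 0 /\ dot b2 b3 <= 0.

Definition selling_reduced (L : pointset) (b1 b2 b3 : vec) : Prop :=
  lattice_basis L b1 b2 b3 /\
  forall c1 c2 c3, lattice_basis L c1 c2 c3 -> selling_sum b1 b2 b3 <= selling_sum c1 c2 c3.

Lemma selling_reduced_swap12 L a b c : selling_reduced L a b c -> selling_reduced L b a c.
Proof.
  intros [Hb Hmin]; split; [exact (lattice_basis_swap12 _ _ _ _ Hb)|].
  intros; replace (selling_sum b a c) with (selling_sum a b c) by (unfold selling_sum; vec_ring).
  auto.
Qed.

Lemma selling_reduced_swap23 L a b c : selling_reduced L a b c -> selling_reduced L a c b.
Proof.
  intros [Hb Hmin]; split; [exact (lattice_basis_swap23 _ _ _ _ Hb)|].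
  intros; replace (selling_sum a c b) with (selling_sum a b c) by (unfold selling_sum; vec_ring).
  auto.
Qed.

(* Each inequality is the minimality of the Selling sum against one elementary basis change. *)
Lemma selling_reduced_local L a b c : selling_reduced L a b c ->
  dot (vneg (vadd (vadd a b) c)) a <= 0 /\ dot a b <= 0 /\ dot a c <= 0.
Proof.
  intros [Hb Hmin].
  pose proof (Hmin _ _ _ (lattice_basis_shear L a b c 1 1 Hb)) as H11.
  pose proof (Hmin _ _ _ (lattice_basis_shear L a b c 0 1 Hb)) as H01.
  pose proof (Hmin _ _ _ (lattice_basis_shear L a b c 1 0 Hb)) as H10.
  unfold selling_sum in *; destruct_vecs; cbn in *; repeat split; nra.
Qed.

Lemma selling_reduced_obtuse L a b c : selling_reduced L a b c -> obtuse a b c.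
Proof.
  intro H.
  pose proof (selling_reduced_local _ _ _ _ H) as Ha.
  pose proof (selling_reduced_local _ _ _ _ (selling_reduced_swap12 _ _ _ _ H)) as Hb.
  pose proof (selling_reduced_local _ _ _ _
    (selling_reduced_swap12 _ _ _ _ (selling_reduced_swap23 _ _ _ _ H))) as Hc.
  unfold obtuse; destruct_vecs; cbn in *; lra.
Qed.

Definition det3 (u1 u2 u3 : vec) : R := dot u1 (cross u2 u3).

Lemma cramer w u1 u2 u3 :
  comb (dot w (cross u2 u3)) (dot w (cross u3 u1)) (dot w (cross u1 u2)) u1 u2 u3
  = vscale (det3 u1 u2 u3) w.
Proof. unfold det3; vec_ring. Qed.

Lemma det3_neq0 u1 u2 u3 : lin_indep u1 u2 u3 -> det3 u1 u2 u3 <> 0.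
Proof.
  intros Hli HD.
  pose proof (cramer (cross u2 u3) u1 u2 u3) as E0.
  rewrite HD in E0; replace (vscale 0 (cross u2 u3)) with vzero in E0 by vec_ring.
  destruct (Hli _ _ _ E0) as (Hc & _ & _); change (nrm (cross u2 u3) = 0) in Hc.
  apply nrm_eq0 in Hc.
  assert (Hu2 : nrm u2 = 0).
  { assert (E : comb 0 (dot u2 u3) (- nrm u2) u1 u2 u3 = cross u2 (cross u2 u3)) by vec_ring.
    rewrite Hc in E; replace (cross u2 vzero) with vzero in E by vec_ring.
    destruct (Hli _ _ _ E) as (_ & _ & H); lra. }
  apply nrm_eq0 in Hu2.
  assert (E : comb 0 1 0 u1 u2 u3 = vzero) by (rewrite Hu2; vec_ring).
  destruct (Hli _ _ _ E) as (_ & H & _); lra.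
Qed.

Lemma dot_sq_le x y : (dot x y) ^ 2 <= nrm x * nrm y.
Proof.
  assert (E : nrm x * nrm y - (dot x y) ^ 2 = nrm (cross x y)) by vec_ring.
  pose proof (nrm_nonneg (cross x y)); lra.
Qed.

Lemma comb_coef_bound a b c u1 u2 u3 :
  (a ^ 2 + b ^ 2 + c ^ 2) * det3 u1 u2 u3 ^ 2 <=
  nrm (comb a b c u1 u2 u3) * (nrm (cross u2 u3) + nrm (cross u3 u1) + nrm (cross u1 u2)).
Proof.
  set (x := comb a b c u1 u2 u3).
  assert (E1 : dot x (cross u2 u3) = a * det3 u1 u2 u3) by (unfold x, det3; vec_ring).
  assert (E2 : dot x (cross u3 u1) = b * det3 u1 u2 u3) by (unfold x, det3; vec_ring).
  assert (E3 : dot x (cross u1 u2) = c * det3 u1 u2 u3) by (unfold x, det3; vec_ring).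
  pose proof (dot_sq_le x (cross u2 u3)); pose proof (dot_sq_le x (cross u3 u1));
    pose proof (dot_sq_le x (cross u1 u2)).
  rewrite E1 in *; rewrite E2 in *; rewrite E3 in *; nra.
Qed.

Lemma zcomb_coef_bounded u1 u2 u3 (S : R) : lin_indep u1 u2 u3 ->
  exists N : Z, forall a b c : Z, nrm (zcomb a b c u1 u2 u3) <= S ->
    (Z.abs a <= N /\ Z.abs b <= N /\ Z.abs c <= N)%Z.
Proof.
  intro Hli.
  set (P := nrm (cross u2 u3) + nrm (cross u3 u1) + nrm (cross u1 u2)).
  set (D2 := det3 u1 u2 u3 ^ 2).
  assert (HD2 : 0 < D2) by (unfold D2; rewrite <- Rsqr_pow2; apply Rsqr_pos_lt, det3_neq0, Hli).
  assert (HP : 0 <= P) by (unfold P; pose proof (nrm_nonneg (cross u2 u3));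
    pose proof (nrm_nonneg (cross u3 u1)); pose proof (nrm_nonneg (cross u1 u2)); lra).
  exists (up (S * P / D2)); intros a b c HS.
  pose proof (comb_coef_bound (IZR a) (IZR b) (IZR c) u1 u2 u3) as H; fold P D2 in H.
  assert (Hsum : IZR a ^ 2 + IZR b ^ 2 + IZR c ^ 2 <= S * P / D2).
  { apply Rmult_le_reg_r with D2; [exact HD2|].
    unfold Rdiv; rewrite Rmult_assoc, Rinv_l, Rmult_1_r by lra.
    apply Rle_trans with (1 := H), Rmult_le_compat_r; assumption. }
  assert (Hup := proj1 (archimed (S * P / D2))).
  assert (Hz : (a * a + b * b + c * c < up (S * P / D2))%Z).
  { apply lt_IZR; rewrite !plus_IZR, !mult_IZR; lra. }
  nia.
Qed.

Definition Zbox (N : Z) : list Z :=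
  map (fun k => (Z.of_nat k - N)%Z) (seq 0 (Z.to_nat (2 * N + 1))).

Lemma in_Zbox N z : (Z.abs z <= N)%Z -> In z (Zbox N).
Proof.
  intro H; apply in_map_iff; exists (Z.to_nat (z + N)); split.
  - rewrite Z2Nat.id; lia.
  - apply in_seq; lia.
Qed.

Definition box_points (u1 u2 u3 : vec) (N : Z) : list vec :=
  map (fun '(a, b, c) => zcomb a b c u1 u2 u3)
      (list_prod (list_prod (Zbox N) (Zbox N)) (Zbox N)).

Lemma in_box_points u1 u2 u3 N a b c :
  (Z.abs a <= N /\ Z.abs b <= N /\ Z.abs c <= N)%Z ->
  In (zcomb a b c u1 u2 u3) (box_points u1 u2 u3 N).
Proof.
  intros (Ha & Hb & Hc); apply in_map_iff; exists (a, b, c); split; [reflexivity|].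
  repeat apply in_prod; apply in_Zbox; assumption.
Qed.

Lemma list_argmin_on {A : Type} (P : A -> Prop) (f : A -> R) (l : list A) :
  (exists x, In x l /\ P x) ->
  exists x, In x l /\ P x /\ forall y, In y l -> P y -> f x <= f y.
Proof.
  induction l as [|a l IH]; intros (x & Hx & HPx); [destruct Hx|].
  destruct (classic (exists y, In y l /\ P y)) as [Hl|Hl].
  - destruct (IH Hl) as (m & Hm & HPm & Hmin).
    destruct (classic (P a /\ f a <= f m)) as [[HPa Ham]|Ham].
    + exists a; split; [left; reflexivity|split; [exact HPa|]].
      intros y [<-|Hy] HPy; [lra|]; specialize (Hmin y Hy HPy); lra.
    + exists m; split; [right; exact Hm|split; [exact HPm|]].
      intros y [<-|Hy] HPy; [|auto].
      apply Rnot_lt_le; intro Hlt; apply Ham; split; [exact HPy|lra].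
  - destruct Hx as [<-|Hx]; [|exfalso; eauto].
    exists a; split; [left; reflexivity|split; [exact HPx|]].
    intros y [<-|Hy] HPy; [lra|exfalso; eauto].
Qed.

Lemma nrm_le_selling_sum b1 b2 b3 :
  nrm b1 <= selling_sum b1 b2 b3 /\ nrm b2 <= selling_sum b1 b2 b3 /\
  nrm b3 <= selling_sum b1 b2 b3.
Proof.
  unfold selling_sum; pose proof (nrm_nonneg b1); pose proof (nrm_nonneg b2);
    pose proof (nrm_nonneg b3); pose proof (nrm_nonneg (vadd (vadd b1 b2) b3)); lra.
Qed.

(* Bases with Selling sum at most that of a fixed basis have coordinates in a finite box. *)
Lemma selling_reduced_exists L : is_lattice L -> exists b1 b2 b3, selling_reduced L b1 b2 b3.
Proof.
  intros (u1 & u2 & u3 & Hu).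
  set (S := selling_sum u1 u2 u3).
  destruct (zcomb_coef_bounded u1 u2 u3 S (proj1 Hu)) as [N HN].
  set (V := box_points u1 u2 u3 N).
  assert (HV : forall x, L x -> nrm x <= S -> In x V).
  { intros x Hx HxS; apply (proj2 Hu) in Hx as (a & b & c & ->).
    apply in_box_points, HN, HxS. }
  assert (Hin : forall b1 b2 b3, lattice_basis L b1 b2 b3 -> selling_sum b1 b2 b3 <= S ->
            In (b1, b2, b3) (list_prod (list_prod V V) V)).
  { intros b1 b2 b3 Hb HbS.
    destruct (lattice_basis_mem3 _ _ _ _ Hb) as (H1 & H2 & H3).
    destruct (nrm_le_selling_sum b1 b2 b3) as (N1 & N2 & N3).
    repeat apply in_prod; apply HV; auto; lra. }
  destruct (list_argmin_on (fun '(b1, b2, b3) => lattice_basis L b1 b2 b3)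
              (fun '(b1, b2, b3) => selling_sum b1 b2 b3) (list_prod (list_prod V V) V))
    as ([[b1 b2] b3] & _ & Hb & Hmin).
  { exists (u1, u2, u3); split; [apply Hin; [exact Hu | unfold S; lra] | exact Hu]. }
  exists b1, b2, b3; split; [exact Hb|]; intros c1 c2 c3 Hc.
  destruct (Rle_dec (selling_sum c1 c2 c3) S) as [HcS|HcS].
  - exact (Hmin (c1, c2, c3) (Hin _ _ _ Hc HcS) Hc).
  - assert (Hu' := Hmin (u1, u2, u3) (Hin _ _ _ Hu (Rle_refl _)) Hu).
    cbn in Hu'; fold S in Hu'; lra.
Qed.

(* Selling's formula; the coefficients -bi.bj are nonnegative iff the superbase is obtuse. *)
Definition selling_form (b1 b2 b3 : vec) (x0 x1 x2 x3 : Z) : R :=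
  let b0 := vneg (vadd (vadd b1 b2) b3) in
  - (dot b0 b1 * IZR (x0 - x1) ^ 2 + dot b0 b2 * IZR (x0 - x2) ^ 2
     + dot b0 b3 * IZR (x0 - x3) ^ 2 + dot b1 b2 * IZR (x1 - x2) ^ 2
     + dot b1 b3 * IZR (x1 - x3) ^ 2 + dot b2 b3 * IZR (x2 - x3) ^ 2).

Lemma nrm_zcomb_selling b1 b2 b3 x0 x1 x2 x3 :
  nrm (zcomb (x1 - x0) (x2 - x0) (x3 - x0) b1 b2 b3) = selling_form b1 b2 b3 x0 x1 x2 x3.
Proof. unfold selling_form, zcomb; rewrite !minus_IZR; vec_ring. Qed.

Definition top_indicator (M x : Z) : Z := if Z.eq_dec x M then 1%Z else 0%Z.

(* (d - t)^2 + t^2 <= d^2 as soon as t = e_i - e_j is 0 or has the sign of d with |t| = 1. *)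
Lemma sq_diff_split M xi xj : (xi <= M)%Z -> (xj <= M)%Z ->
  IZR ((xi - top_indicator M xi) - (xj - top_indicator M xj)) ^ 2
  + IZR (top_indicator M xi - top_indicator M xj) ^ 2 <= IZR (xi - xj) ^ 2.
Proof.
  intros Hi Hj; rewrite !pow_IZR, <- plus_IZR; apply IZR_le; cbn [Z.of_nat Pos.of_succ_nat].
  unfold top_indicator; destruct (Z.eq_dec xi M), (Z.eq_dec xj M); nia.
Qed.

Lemma selling_form_split b1 b2 b3 x0 x1 x2 x3 M :
  obtuse b1 b2 b3 -> (x0 <= M /\ x1 <= M /\ x2 <= M /\ x3 <= M)%Z ->
  let e := top_indicator M in
  selling_form b1 b2 b3 (x0 - e x0) (x1 - e x1) (x2 - e x2) (x3 - e x3)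
  + selling_form b1 b2 b3 (e x0) (e x1) (e x2) (e x3) <= selling_form b1 b2 b3 x0 x1 x2 x3.
Proof.
  intros Hob (H0 & H1 & H2 & H3); cbv zeta; unfold obtuse, selling_form in *.
  destruct Hob as (W01 & W02 & W03 & W12 & W13 & W23).
  assert (Hw : forall w p q, w <= 0 -> p <= q -> w * q <= w * p) by (intros; nra).
  pose proof (Hw _ _ _ W01 (sq_diff_split M x0 x1 H0 H1));
    pose proof (Hw _ _ _ W02 (sq_diff_split M x0 x2 H0 H2));
    pose proof (Hw _ _ _ W03 (sq_diff_split M x0 x3 H0 H3));
    pose proof (Hw _ _ _ W12 (sq_diff_split M x1 x2 H1 H2));
    pose proof (Hw _ _ _ W13 (sq_diff_split M x1 x3 H1 H3));
    pose proof (Hw _ _ _ W23 (sq_diff_split M x2 x3 H2 H3)).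
  lra.
Qed.

Lemma obtuse_short_coords b1 b2 b3 :
  obtuse b1 b2 b3 ->
  (forall a b c : Z, ~ (a = 0 /\ b = 0 /\ c = 0)%Z -> 4 <= nrm (zcomb a b c b1 b2 b3)) ->
  forall c1 c2 c3 : Z, nrm (zcomb c1 c2 c3 b1 b2 b3) < 8 ->
  (0 <= c1 <= 1 /\ 0 <= c2 <= 1 /\ 0 <= c3 <= 1)%Z \/
  (-1 <= c1 <= 0 /\ -1 <= c2 <= 0 /\ -1 <= c3 <= 0)%Z.
Proof.
  intros Hob Hmin c1 c2 c3 Hlt; apply NNPP; intro Hspread.
  set (M := Z.max (Z.max 0 c1) (Z.max c2 c3)).
  pose proof (selling_form_split b1 b2 b3 0 c1 c2 c3 M Hob ltac:(lia)) as Hsplit.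
  cbv zeta in Hsplit.
  rewrite <- !nrm_zcomb_selling, !Z.sub_0_r in Hsplit.
  set (e := top_indicator M) in Hsplit.
  assert (He : forall x, e x = 1%Z /\ x = M \/ e x = 0%Z /\ x <> M)
    by (intro x; unfold e, top_indicator; destruct (Z.eq_dec x M); auto).
  destruct (He 0%Z), (He c1), (He c2), (He c3);
    assert (A : 4 <= nrm (zcomb (c1 - e c1 - (0 - e 0%Z)) (c2 - e c2 - (0 - e 0%Z))
                                (c3 - e c3 - (0 - e 0%Z)) b1 b2 b3)) by (apply Hmin; lia);
    assert (B : 4 <= nrm (zcomb (e c1 - e 0%Z) (e c2 - e 0%Z) (e c3 - e 0%Z) b1 b2 b3))
      by (apply Hmin; lia);
    lra.
Qed.

Definition fcc_form (a b c : Z) : Z := 4 * (a * a + b * b + c * c - a * c - b * c).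

Lemma obtuse_min_vectors_fcc b1 b2 b3 :
  obtuse b1 b2 b3 ->
  (forall a b c : Z, ~ (a = 0 /\ b = 0 /\ c = 0)%Z -> 4 <= nrm (zcomb a b c b1 b2 b3)) ->
  4 < nrm (vadd b1 b2) ->
  forall a b c : Z, nrm (zcomb a b c b1 b2 b3) = 4 -> fcc_form a b c = 4%Z.
Proof.
  intros Hob Hmin Hpair a b c E.
  replace (nrm (vadd b1 b2)) with (nrm b1 + nrm b2 + 2 * dot b1 b2) in Hpair by vec_ring.
  destruct (obtuse_short_coords b1 b2 b3 Hob Hmin a b c ltac:(lra)) as [Hc|Hc];
    assert (Ha' : a = 0%Z \/ a = 1%Z \/ a = (-1)%Z) by lia;
    assert (Hb' : b = 0%Z \/ b = 1%Z \/ b = (-1)%Z) by lia;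
    assert (Hc' : c = 0%Z \/ c = 1%Z \/ c = (-1)%Z) by lia;
    unfold zcomb in E; rewrite nrm_comb in E;
    destruct Ha' as [-> | [-> | ->]]; destruct Hb' as [-> | [-> | ->]];
    destruct Hc' as [-> | [-> | ->]];
    (* of the coordinates left by obtuse_short_coords, only 0 and +-(1,1,0) have fcc_form <> 4 *)
    first [reflexivity | lia | lra].
Qed.

Lemma obtuse_swap12 b1 b2 b3 : obtuse b1 b2 b3 -> obtuse b2 b1 b3.
Proof. unfold obtuse; destruct_vecs; cbn; lra. Qed.

Lemma obtuse_swap23 b1 b2 b3 : obtuse b1 b2 b3 -> obtuse b1 b3 b2.
Proof. unfold obtuse; destruct_vecs; cbn; lra. Qed.

(* |b1+b2|^2 + |b1+b3|^2 + |b2+b3|^2 is the Selling sum, which is at least 16. *)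
Lemma exists_long_pair b1 b2 b3 :
  (forall a b c : Z, ~ (a = 0 /\ b = 0 /\ c = 0)%Z -> 4 <= nrm (zcomb a b c b1 b2 b3)) ->
  4 < nrm (vadd b1 b2) \/ 4 < nrm (vadd b1 b3) \/ 4 < nrm (vadd b2 b3).
Proof.
  intro Hmin.
  pose proof (Hmin 1%Z 0%Z 0%Z ltac:(lia)); pose proof (Hmin 0%Z 1%Z 0%Z ltac:(lia));
    pose proof (Hmin 0%Z 0%Z 1%Z ltac:(lia)); pose proof (Hmin 1%Z 1%Z 1%Z ltac:(lia)).
  assert (E : nrm (vadd b1 b2) + nrm (vadd b1 b3) + nrm (vadd b2 b3) =
              nrm (zcomb 1 0 0 b1 b2 b3) + nrm (zcomb 0 1 0 b1 b2 b3)
              + nrm (zcomb 0 0 1 b1 b2 b3) + nrm (zcomb 1 1 1 b1 b2 b3)) by vec_ring.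
  destruct (Rlt_dec 4 (nrm (vadd b1 b2))); [left; assumption|].
  destruct (Rlt_dec 4 (nrm (vadd b1 b3))); [right; left; assumption|].
  right; right; lra.
Qed.

Lemma fcc_compatible_basis L :
  is_lattice L -> (forall x, L x -> x <> vzero -> 2 <= edist x vzero) ->
  exists v1 v2 v3, lattice_basis L v1 v2 v3 /\
    forall a b c : Z, nrm (zcomb a b c v1 v2 v3) = 4 -> fcc_form a b c = 4%Z.
Proof.
  intros HL Hmin.
  assert (Hgood : forall b1 b2 b3, lattice_basis L b1 b2 b3 -> obtuse b1 b2 b3 ->
            4 < nrm (vadd b1 b2) ->
            exists v1 v2 v3, lattice_basis L v1 v2 v3 /\
              forall a b c : Z, nrm (zcomb a b c v1 v2 v3) = 4 -> fcc_form a b c = 4%Z).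
  { intros b1 b2 b3 Hb Hob Hpair; exists b1, b2, b3; split; [exact Hb|].
    exact (obtuse_min_vectors_fcc b1 b2 b3 Hob (lattice_nrm_ge4 L _ _ _ Hb Hmin) Hpair). }
  destruct (selling_reduced_exists L HL) as (b1 & b2 & b3 & Hred).
  pose proof (selling_reduced_obtuse _ _ _ _ Hred) as Hob; destruct Hred as [Hb _].
  destruct (exists_long_pair b1 b2 b3 (lattice_nrm_ge4 L _ _ _ Hb Hmin)) as [H12|[H13|H23]].
  - exact (Hgood b1 b2 b3 Hb Hob H12).
  - exact (Hgood b1 b3 b2 (lattice_basis_swap23 _ _ _ _ Hb) (obtuse_swap23 _ _ _ Hob) H13).
  - exact (Hgood b2 b3 b1 (lattice_basis_swap23 _ _ _ _ (lattice_basis_swap12 _ _ _ _ Hb))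
             (obtuse_swap23 _ _ _ (obtuse_swap12 _ _ _ Hob)) H23).
Qed.

(* (fcc_b1, fcc_b2, fcc_b3, -(fcc_b1 + fcc_b2 + fcc_b3)) is an obtuse superbase of the fcc
   lattice whose only orthogonal pairs are {1, 2} and {0, 3}. *)
Definition fcc_b1 : vec := (sqrt 2, sqrt 2, 0).
Definition fcc_b2 : vec := (sqrt 2, - sqrt 2, 0).
Definition fcc_b3 : vec := (- sqrt 2, 0, - sqrt 2).

Lemma lattice_basis_fcc : lattice_basis Lambda_fcc fcc_b1 fcc_b2 fcc_b3.
Proof.
  assert (Hs : 0 < sqrt 2) by (apply sqrt_lt_R0; lra).
  split.
  - intros a b c E; unfold comb, vadd, vscale, fcc_b1, fcc_b2, fcc_b3, vzero in E; cbn in E.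
    injection E; intros E3 E2 E1.
    assert (c = 0) by nra; subst c; assert (a = b) by nra; subst; assert (b = 0) by nra; lra.
  - intro x; unfold Lambda_fcc; split; intros (a & b & c & ->).
    + exists a, (- c)%Z, (- b - c)%Z.
      unfold zcomb, fcc1, fcc2, fcc3, fcc_b1, fcc_b2, fcc_b3; rewrite !minus_IZR, !opp_IZR;
        vec_ring.
    + exists a, (b - c)%Z, (- b)%Z.
      unfold zcomb, fcc1, fcc2, fcc3, fcc_b1, fcc_b2, fcc_b3; rewrite !minus_IZR, !opp_IZR;
        vec_ring.
Qed.

Lemma nrm_zcomb_fcc a b c : nrm (zcomb a b c fcc_b1 fcc_b2 fcc_b3) = IZR (fcc_form a b c).
Proof.
  unfold zcomb, fcc_form; rewrite mult_IZR, !minus_IZR, !plus_IZR, !mult_IZR.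
  unfold fcc_b1, fcc_b2, fcc_b3; cbn.
  transitivity (sqrt 2 * sqrt 2 * ((IZR a + IZR b - IZR c) ^ 2 + (IZR a - IZR b) ^ 2 + IZR c ^ 2));
    [ring | rewrite sqrt_sqrt by lra; ring].
Qed.

Lemma fcc_form_ge4 a b c : ~ (a = 0 /\ b = 0 /\ c = 0)%Z -> (4 <= fcc_form a b c)%Z.
Proof.
  intro Habc; unfold fcc_form.
  assert (Hsq : forall x, (x <> 0 -> 1 <= x * x)%Z) by (intros; nia).
  pose proof (Z.square_nonneg (a - c)); pose proof (Z.square_nonneg (b - c)).
  destruct (Z.eq_dec a 0) as [->|Ha]; destruct (Z.eq_dec b 0) as [->|Hb];
    destruct (Z.eq_dec c 0) as [->|Hc];
    repeat match goal with H : (?x <> 0)%Z |- _ => apply Hsq in H end; nia.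
Qed.

Lemma fcc_min_dist x : Lambda_fcc x -> x <> vzero -> 2 <= edist x vzero.
Proof.
  intros Hx Hnz; apply (proj2 lattice_basis_fcc) in Hx as (a & b & c & ->).
  rewrite edist0r, sqrt_ge_2, nrm_zcomb_fcc by apply nrm_nonneg.
  apply IZR_le, fcc_form_ge4; intros (-> & -> & ->); apply Hnz; vec_ring.
Qed.

Lemma bounded_nat_max (A : nat -> Prop) (B : nat) :
  (exists m, A m) -> (forall k, A k -> (k <= B)%nat) ->
  exists m, A m /\ forall k, A k -> (k <= m)%nat.
Proof.
  revert A; induction B as [|B IH]; intros A [m Hm] Hle.
  - exists m; split; [exact Hm|]; intros k Hk; pose proof (Hle _ Hk); pose proof (Hle _ Hm); lia.
  - destruct (classic (A (S B))) as [HB|HB].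
    + exists (S B); split; assumption.
    + apply IH; [eauto|]; intros k Hk; specialize (Hle _ Hk).
      destruct (Nat.eq_dec k (S B)) as [->|]; [contradiction|lia].
Qed.

Lemma contacts_le_sq P : (contacts P <= length P * length P)%nat.
Proof.
  induction P as [|x P IH]; cbn; [lia|].
  pose proof (filter_length_le (fun y => if Req_EM_T (edist x y) 2 then true else false) P); nia.
Qed.

Lemma line_packing L v1 v2 v3 n :
  lattice_basis L v1 v2 v3 -> (forall x, L x -> x <> vzero -> 2 <= edist x vzero) ->
  exists P, packing L P /\ length P = n.
Proof.
  intros Hb Hmin.
  set (f := fun k : nat => zcomb (Z.of_nat k) 0 0 v1 v2 v3).
  exists (map f (seq 0 n)); rewrite length_map, length_seq; split; [split|reflexivity].
  - intros x Hx; apply in_map_iff in Hx as (k & <- & _); apply lattice_basis_mem, Hb.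
  - intros i j Hij; rewrite length_map, length_seq in Hij.
    rewrite !(nth_indep _ vzero (f 0%nat)), !map_nth, !seq_nth
      by (rewrite ?length_map, ?length_seq; lia).
    unfold f; rewrite edist_zcomb, sqrt_ge_2 by apply nrm_nonneg.
    apply (lattice_nrm_ge4 L v1 v2 v3 Hb Hmin); lia.
Qed.

Lemma is_C_exists L v1 v2 v3 n :
  lattice_basis L v1 v2 v3 -> (forall x, L x -> x <> vzero -> 2 <= edist x vzero) ->
  exists m, is_C L n m.
Proof.
  intros Hb Hmin.
  destruct (bounded_nat_max (fun m => exists P, packing L P /\ length P = n /\ contacts P = m)
              (n * n)) as (m & Hm & Hmax).
  - destruct (line_packing L v1 v2 v3 n Hb Hmin) as (P & HP & Hn); eauto.
  - intros k (P & _ & <- & <-); apply contacts_le_sq.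
  - exists m; split; [exact Hm|]; intros P HP Hn; apply Hmax; eauto.
Qed.

Lemma length_filter_map_le (g : vec -> vec) (p q : vec -> bool) (l : list vec) :
  (forall y, In y l -> p y = true -> q (g y) = true) ->
  (length (filter p l) <= length (filter q (map g l)))%nat.
Proof.
  induction l as [|y l IH]; intro H; cbn; [lia|].
  assert (IH' := IH (fun z Hz => H z (or_intror Hz))).
  destruct (p y) eqn:Ey; [rewrite (H y (or_introl eq_refl) Ey); cbn; lia|].
  destruct (q (g y)); cbn; lia.
Qed.

Lemma contacts_map_le (g : vec -> vec) (P : list vec) :
  (forall x y, In x P -> In y P -> edist x y = 2 -> edist (g x) (g y) = 2) ->
  (contacts P <= contacts (map g P))%nat.
Proof.
  induction P as [|x P IH]; intro Hg; cbn; [lia|].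
  apply Nat.add_le_mono.
  - apply length_filter_map_le; intros y Hy.
    destruct (Req_EM_T (edist x y) 2) as [E|]; [|discriminate]; intros _.
    destruct (Req_EM_T (edist (g x) (g y)) 2) as [|NE]; [reflexivity|].
    exfalso; apply NE, Hg; cbn; auto.
  - apply IH; intros; apply Hg; cbn; auto.
Qed.

Lemma packing_map L L' (g : vec -> vec) P :
  (forall x, L x -> L' (g x)) ->
  (forall x y, L x -> L y -> 2 <= edist x y -> 2 <= edist (g x) (g y)) ->
  packing L P -> packing L' (map g P).
Proof.
  intros HgL Hgsep [HPL HPsep]; split.
  - intros y Hy; apply in_map_iff in Hy as (x & <- & Hx); auto.
  - intros i j Hij; rewrite length_map in Hij.
    rewrite !(nth_indep _ vzero (g vzero)), !map_nth by (rewrite length_map; lia).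
    apply Hgsep; [apply HPL, nth_In; lia | apply HPL, nth_In; lia | apply HPsep, Hij].
Qed.

Lemma is_C_le_of_map L L' (g : vec -> vec) n m m' :
  (forall x, L x -> L' (g x)) ->
  (forall x y, L x -> L y -> 2 <= edist x y -> 2 <= edist (g x) (g y)) ->
  (forall x y, L x -> L y -> edist x y = 2 -> edist (g x) (g y) = 2) ->
  is_C L n m -> is_C L' n m' -> (m <= m')%nat.
Proof.
  intros HgL Hgsep Hgtouch [(P & HP & Hn & <-) _] [_ Hmax'].
  apply Nat.le_trans with (contacts (map g P)).
  - apply contacts_map_le; intros x y Hx Hy; apply Hgtouch; apply (proj1 HP); assumption.
  - apply Hmax'; [exact (packing_map L L' g P HgL Hgsep HP) | rewrite length_map; exact Hn].
Qed.

Definition lattice_coords (v1 v2 v3 x : vec) : Z * Z * Z :=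
  epsilon (inhabits (0, 0, 0)%Z) (fun '(a, b, c) => x = zcomb a b c v1 v2 v3).

Definition lattice_map (v1 v2 v3 w1 w2 w3 : vec) (x : vec) : vec :=
  let '(a, b, c) := lattice_coords v1 v2 v3 x in zcomb a b c w1 w2 w3.

Lemma lattice_map_spec L v1 v2 v3 w1 w2 w3 x : lattice_basis L v1 v2 v3 -> L x ->
  exists a b c, x = zcomb a b c v1 v2 v3 /\ lattice_map v1 v2 v3 w1 w2 w3 x = zcomb a b c w1 w2 w3.
Proof.
  intros [_ Hspan] Hx.
  assert (H : let '(a, b, c) := lattice_coords v1 v2 v3 x in x = zcomb a b c v1 v2 v3).
  { unfold lattice_coords; apply epsilon_spec.
    apply Hspan in Hx as (a & b & c & E); exists (a, b, c); exact E. }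
  unfold lattice_map; destruct (lattice_coords v1 v2 v3 x) as [[a b] c]; eauto.
Qed.

(* A coordinate-preserving map into a lattice of minimum 2 keeps packings, since distinct
   points keep distinct coordinates. *)
Lemma lattice_map_C_le L L' v1 v2 v3 w1 w2 w3 n m m' :
  lattice_basis L v1 v2 v3 -> lattice_basis L' w1 w2 w3 ->
  (forall x, L' x -> x <> vzero -> 2 <= edist x vzero) ->
  (forall a b c a' b' c' : Z,
     edist (zcomb a b c v1 v2 v3) (zcomb a' b' c' v1 v2 v3) = 2 ->
     edist (zcomb a b c w1 w2 w3) (zcomb a' b' c' w1 w2 w3) = 2) ->
  is_C L n m -> is_C L' n m' -> (m <= m')%nat.
Proof.
  intros Hv Hw Hmin' Htouch.
  apply (is_C_le_of_map L L' (lattice_map v1 v2 v3 w1 w2 w3)).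
  - intros x Hx; destruct (lattice_map_spec L v1 v2 v3 w1 w2 w3 x Hv Hx) as (a & b & c & _ & ->).
    apply lattice_basis_mem, Hw.
  - intros x y Hx Hy Hxy.
    destruct (lattice_map_spec L v1 v2 v3 w1 w2 w3 x Hv Hx) as (a & b & c & -> & ->).
    destruct (lattice_map_spec L v1 v2 v3 w1 w2 w3 y Hv Hy) as (a' & b' & c' & -> & ->).
    rewrite edist_zcomb, sqrt_ge_2 by apply nrm_nonneg.
    apply (lattice_nrm_ge4 L' w1 w2 w3 Hw Hmin'); intros (Ea & Eb & Ec).
    replace a' with a in Hxy by lia; replace b' with b in Hxy by lia;
      replace c' with c in Hxy by lia.
    rewrite edist_zcomb, !Z.sub_diag in Hxy.
    replace (nrm (zcomb 0 0 0 v1 v2 v3)) with 0 in Hxy by vec_ring.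
    rewrite sqrt_0 in Hxy; lra.
  - intros x y Hx Hy Hxy.
    destruct (lattice_map_spec L v1 v2 v3 w1 w2 w3 x Hv Hx) as (a & b & c & -> & ->).
    destruct (lattice_map_spec L v1 v2 v3 w1 w2 w3 y Hv Hy) as (a' & b' & c' & -> & ->).
    apply Htouch, Hxy.
Qed.

Theorem mainTheorem9 (Lambda : pointset) :
  is_lattice Lambda -> min_norm Lambda 2 ->
  (forall n : nat, (1 <= n)%nat ->
     exists m1 m2 : nat, is_C Lambda n m1 /\ is_C Lambda_fcc n m2 /\ (m1 <= m2)%nat) /\
  (exists v1 v2 v3 w1 w2 w3 : vec,
     lattice_basis Lambda v1 v2 v3 /\ lattice_basis Lambda_fcc w1 w2 w3 /\
     forall a b c a' b' c' : Z,
       edist (zcomb a b c v1 v2 v3) (zcomb a' b' c' v1 v2 v3) = 2 ->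
       edist (zcomb a b c w1 w2 w3) (zcomb a' b' c' w1 w2 w3) = 2).
Proof.
  intros HL [_ Hmin].
  destruct (fcc_compatible_basis Lambda HL Hmin) as (v1 & v2 & v3 & Hv & Hfcc).
  assert (Htouch : forall a b c a' b' c' : Z,
             edist (zcomb a b c v1 v2 v3) (zcomb a' b' c' v1 v2 v3) = 2 ->
             edist (zcomb a b c fcc_b1 fcc_b2 fcc_b3) (zcomb a' b' c' fcc_b1 fcc_b2 fcc_b3) = 2).
  { intros a b c a' b' c' E; rewrite edist_zcomb, sqrt_eq_2 in *.
    rewrite nrm_zcomb_fcc, (Hfcc _ _ _ E); reflexivity. }
  split.
  - intros n _.
    destruct (is_C_exists Lambda v1 v2 v3 n Hv Hmin) as [m1 Hm1].
    destruct (is_C_exists Lambda_fcc _ _ _ n lattice_basis_fcc fcc_min_dist) as [m2 Hm2].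
    exists m1, m2; split; [exact Hm1|split; [exact Hm2|]].
    exact (lattice_map_C_le _ _ _ _ _ _ _ _ n m1 m2 Hv lattice_basis_fcc fcc_min_dist Htouch
             Hm1 Hm2).
  - exists v1, v2, v3, fcc_b1, fcc_b2, fcc_b3; auto using lattice_basis_fcc.
Qed.
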